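(* Let $X$ be a set and let $\mathcal{L}$ be a nest on $X$ satisfying condition (C3). Then $\mathcal{T}_{\mathcal{L}}=\mathcal{T}_l$.
   Context: A nest on $X$ is a family $\mathcal{L}$ of subsets of $X$ such that for all $M,N\in\mathcal{L}$, either $M\subseteq N$ or $N\subseteq M$. Define $x\triangleleft_{\mathcal{L}} y$ iff there exists $L\in\mathcal{L}$ with $x\in L$ and $y\notin L$, and $x\trianglelefteq_{\mathcal{L}} y$ iff $x=y$ or $x\triangleleft_{\mathcal{L}} y$. Suprema are taken with respect to $\trianglelefteq_{\mathcal{L}}$. Condition (C2): for each $L\in\mathcal{L}$, $\sup L$ exists in $X$ and $\sup L\in X-L$. Condition (C3): for each $x\in X$ there exists $L\in\mathcal{L}$ such that $\sup L = x$ and $x\in X-L$, and moreover (C2) holds. $\mathcal{T}_{\mathcal{L}}$ is the topology on $X$ generated by $\mathcal{L}$ as a subbase. For $k\in X$ let ${\uparrow}k=\{y\in X : k\trianglelefteq_{\mathcal{L}} y\}$; the lower topology $\mathcal{T}_l$ is the topology generated by the subbase $\{X-{\uparrow}k : k\in X\}$. *)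

From mathcomp Require Import all_boot.
From mathcomp Require Import boolp classical_sets.
Set Implicit Arguments. Unset Strict Implicit. Unset Printing Implicit Defensive.
Local Open Scope classical_set_scope.

Section NestDefs.
Variable X : Type.

Definition nest (L : set (set X)) : Prop :=
  forall M N, L M -> L N -> M `<=` N \/ N `<=` M.

Definition nest_lt (L : set (set X)) (x y : X) : Prop :=
  exists M, L M /\ M x /\ ~ M y.

Definition nest_le (L : set (set X)) (x y : X) : Prop :=
  x = y \/ nest_lt L x y.

Definition is_sup (L : set (set X)) (A : set X) (s : X) : Prop :=
  (forall a, A a -> nest_le L a s) /\
  (forall u, (forall a, A a -> nest_le L a u) -> nest_le L s u).

Definition C2 (L : set (set X)) : Prop :=
  forall M, L M -> exists s, is_sup L M s /\ ~ M s.

Definition C3 (L : set (set X)) : Prop :=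
  (forall x, exists M, L M /\ is_sup L M x /\ ~ M x) /\ C2 L.

Definition is_topology (T : set (set X)) : Prop :=
  T setT /\
  (forall F : set (set X), F `<=` T -> T (\bigcup_(A in F) A)) /\
  (forall A B, T A -> T B -> T (A `&` B)).

Definition generated_topology (S : set (set X)) : set (set X) :=
  [set U | forall T, is_topology T -> S `<=` T -> T U].

Definition nest_topology (L : set (set X)) : set (set X) :=
  generated_topology L.

Definition upset (L : set (set X)) (k : X) : set X := [set y | nest_le L k y].

Definition lower_topology (L : set (set X)) : set (set X) :=
  generated_topology [set U | exists k, U = ~` upset L k].

End NestDefs.

(* The two subbases coincide.  If M is a member of the nest with supremum
   s outside M, then M is exactly the complement of the up-set of s: a point
   y of M cannot lie above s, since the member of L witnessing s <| y would
   be comparable with M; and a point y outside M lies above every element of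
   M (witnessed by M itself), hence above their supremum s.  By (C2) every
   member of L has this form, and by (C3) every complement of an up-set does. *)

From mathcomp Require Import all_boot.
From mathcomp Require Import boolp classical_sets.
Set Implicit Arguments. Unset Strict Implicit. Unset Printing Implicit Defensive.
Local Open Scope classical_set_scope.

Section NestUpset.
Variables (X : Type) (L : set (set X)).

Lemma nest_sub_setC_upset (M : set X) (s : X) :
  nest L -> L M -> ~ M s -> M `<=` ~` upset L s.
Proof.
move=> nestL LM nMs y My [sy | [N [LN [Ns nNy]]]]; first by apply: nMs; rewrite sy.
by case: (nestL _ _ LM LN) => [MN | NM]; [apply: nNy; apply: MN | apply: nMs; apply: NM].
Qed.

Lemma setC_upset_sup_sub (M : set X) (s : X) :
  L M -> is_sup L M s -> ~` upset L s `<=` M.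
Proof.
move=> LM [_ s_least] y s_not_le_y; apply: contrapT => nMy; apply: s_not_le_y.
by apply: s_least => a Ma; right; exists M.
Qed.

Lemma nest_sup_eq_setC_upset (M : set X) (s : X) :
  nest L -> L M -> is_sup L M s -> ~ M s -> M = ~` upset L s.
Proof.
move=> nestL LM supMs nMs; apply/seteqP; split.
- exact: nest_sub_setC_upset.
- exact: setC_upset_sup_sub.
Qed.

Lemma C3_nest_eq_setC_upsets :
  nest L -> C3 L -> L = [set U | exists k, U = ~` upset L k].
Proof.
move=> nestL [sup_of_each C2L]; apply/seteqP; split => U /=.
- move=> LU; have [s [supUs nUs]] := C2L U LU.
  by exists s; exact: nest_sup_eq_setC_upset.
- move=> [k ->]; have [M [LM [supMk nMk]]] := sup_of_each k.
  by rewrite -(nest_sup_eq_setC_upset nestL LM supMk nMk).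
Qed.

End NestUpset.

Theorem theorem3p1 (X : Type) (L : set (set X)) :
  nest L -> C3 L -> nest_topology L = lower_topology L.
Proof.
move=> nestL C3L; rewrite /nest_topology /lower_topology.
by rewrite -(C3_nest_eq_setC_upsets nestL C3L).
Qed.
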